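(* Let $\mathcal{H}$ be a separable complex Hilbert space, $H$ a self-adjoint operator on $\mathcal{H}$, $\hbar>0$ a constant, and $\psi\in\mathcal{H}$ a unit vector in the domain of $H$. For $t\in\mathbb{R}$ let $p(t)=\left|\langle \psi | e^{-\mathrm{i} tH/\hbar}\psi\rangle\right|^2$, and for $\alpha\ge 0$, $\tau\in\mathbb{R}$ and positive integers $N$ let $p_{N,\alpha}(\tau)=p(\tau N^{\alpha-1})^N$. Then: (i) if $0\le \alpha<1/2$, then $\lim_{N\to+\infty}p_{N,\alpha}(\tau)=1$, uniformly in $\tau$ on compact subsets of $\mathbb{R}$; (ii) if $\alpha=1/2$, then $\lim_{N\to+\infty}p_{N,1/2}(\tau)=\exp(-\tau^2/\tau_Z^2)$, uniformly in $\tau$ on compact subsets of $\mathbb{R}$, where $\tau_Z^{-2}=\frac{1}{\hbar^2}\left(\langle H\psi|H\psi\rangle-\langle\psi|H\psi\rangle^2\right)$; (iii) if $1/2<\alpha<1$ and $\psi$ is not an eigenvector of $H$, then $\lim_{N\to+\infty}p_{N,\alpha}(\tau)=0$, uniformly in $\tau$ on compact subsets of $\mathbb{R}\setminus\{0\}$.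
   Context: $\langle\cdot|\cdot\rangle$ denotes the inner product of $\mathcal{H}$ (linear in the second argument), and $e^{-\mathrm{i}tH/\hbar}$ is the unitary group generated by $H$ via the spectral theorem. The quantity $\langle H\psi|H\psi\rangle-\langle\psi|H\psi\rangle^2$ is the variance of $H$ in $\psi$; it vanishes exactly when $\psi$ is an eigenvector, in which case $\tau_Z^{-2}=0$ and the formula in (ii) reads $1$. *)

From mathcomp Require Import all_boot all_order all_algebra.
From mathcomp Require Import all_classical all_reals all_analysis.
From mathcomp Require Export complex.
Export GRing.Theory Num.Theory numFieldNormedType.Exports.

Set Implicit Arguments.
Unset Strict Implicit.
Unset Printing Implicit Defensive.

Local Open Scope ring_scope.
Local Open Scope complex_scope.
Local Open Scope classical_set_scope.

Section Hilbert.
Variables (R : realType) (V : lmodType R[i]) (ip : V -> V -> R[i]).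

(* ip is an inner product, linear in the SECOND argument, conjugate-linear in
   the first (physicists' convention). *)
Definition is_inner_product : Prop :=
  [/\ (forall x y z (a : R[i]), ip x (a *: y + z) = a * ip x y + ip x z),
      (forall x y, ip y x = (ip x y)^*),
      (forall x, 0 <= ip x x) &
      (forall x, ip x x = 0 -> x = 0)].

Definition hnorm (x : V) : R := Num.sqrt (complex.Re (ip x x)).

Definition hcomplete : Prop :=
  forall u : nat -> V,
    (forall e : R, 0 < e -> exists N : nat, forall m n : nat,
        (N <= m)%N -> (N <= n)%N -> hnorm (u m - u n) < e) ->
    exists l : V, forall e : R, 0 < e -> exists N : nat, forall n : nat,
        (N <= n)%N -> hnorm (u n - l) < e.

Definition hseparable : Prop :=
  exists d : nat -> V, forall (x : V) (e : R), 0 < e ->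
    exists n : nat, hnorm (x - d n) < e.

Definition separable_Hilbert : Prop :=
  [/\ is_inner_product, hcomplete & hseparable].

(* a (possibly unbounded) self-adjoint operator H with domain D:
   D is a dense linear subspace, H is linear on D, and H equals its adjoint
   H^* (same domain, same action). *)
Definition self_adjoint (D : set V) (H : V -> V) : Prop :=
  [/\ D 0 /\
      (forall x y (a : R[i]), D x -> D y -> D (a *: x + y)),
      (forall x y (a : R[i]), D x -> D y -> H (a *: x + y) = a *: H x + H y),
      (forall (x : V) (e : R), 0 < e -> exists2 y, D y & hnorm (x - y) < e),
      (forall y : V, (exists z : V, forall x, D x -> ip (H x) y = ip x z) <-> D y) &
      (forall x y, D x -> D y -> ip (H x) y = ip x (H y))].

Definition strongly_continuous_unitary_group (U : R -> V -> V) : Prop :=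
  [/\ (forall t x y (a : R[i]), U t (a *: x + y) = a *: U t x + U t y),
      (forall t x y, ip (U t x) (U t y) = ip x y),
      (forall x, U 0 x = x),
      (forall s t x, U (s + t) x = U s (U t x)) &
      (forall (x : V) (t e : R), 0 < e -> exists2 d : R, 0 < d &
          forall s : R, `|s - t| < d -> hnorm (U s x - U t x) < e)].

Definition diff_quot_to (U : R -> V -> V) (x v : V) : Prop :=
  forall e : R, 0 < e -> exists2 d : R, 0 < d &
    forall h : R, 0 < `|h| < d -> hnorm ((h^-1)%:C *: (U h x - x) - v) < e.

(* U t = exp(- i t H / hbar): U is the strongly continuous unitary group
   whose generator is -(i/hbar) H, with domain exactly D. *)
Definition generated_by (hbar : R) (D : set V) (H : V -> V) (U : R -> V -> V) : Prop :=
  [/\ strongly_continuous_unitary_group U,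
      (forall x, (exists v, diff_quot_to U x v) <-> D x) &
      (forall x, D x -> diff_quot_to U x (- ('i / hbar%:C) *: H x))].

End Hilbert.

Definition sqmod (R : realType) (z : R[i]) : R :=
  complex.Re z ^+ 2 + complex.Im z ^+ 2.

Definition unif_cvg_on (R : realType) (K : set R) (f : nat -> R -> R) (g : R -> R) : Prop :=
  forall e : R, 0 < e -> exists N0 : nat, forall N : nat, (0 < N)%N -> (N0 <= N)%N ->
    forall tau, K tau -> `|f N tau - g tau| < e.

Definition unif_cvg_compacts (R : realType) (S : set R) (f : nat -> R -> R) (g : R -> R) : Prop :=
  forall K : set R, compact K -> K `<=` S -> unif_cvg_on K f g.

(* Write [U t psi - psi = t w_t]; by assumption [w_t] tends to
   [a = -(i/hbar) H psi].  Since [U t] is unitary and [psi] is a unit vector,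
   [Re <psi|U t psi> = 1 - t^2 |w_t|^2 / 2] and [Im <psi|U t psi> = t Im <psi|w_t>],
   so [p t = 1 - v t^2 + o(t^2)] with [v = |a|^2 - (Im <psi|a>)^2 = tau_Z^-2].
   At [t = tau N^(alpha-1)] this gives [N (p t - 1) = -v tau^2 N^(2 alpha - 1) + o(...)],
   and [p t ^ N] is close to [exp (N (p t - 1))], which tends uniformly on compacts
   to [1], [exp (- v tau^2)] or [0] according as [2 alpha - 1] is negative, zero or
   positive.  In the last case [v > 0], since [v = 0] forces
   [H psi = <psi|H psi> psi]. *)

From mathcomp Require Import all_boot all_order all_algebra.
From mathcomp Require Import all_classical all_reals all_analysis.
From mathcomp Require Import complex ring lra.
Import Order.TTheory GRing.Theory Num.Theory numFieldNormedType.Exports.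

Set Implicit Arguments.
Unset Strict Implicit.
Unset Printing Implicit Defensive.

Local Open Scope ring_scope.
Local Open Scope complex_scope.
Local Open Scope classical_set_scope.

Lemma sqmod_real (R : realType) (l : R) : sqmod l%:C = l ^+ 2.
Proof. by rewrite /sqmod /= expr0n addr0. Qed.

Section InnerProduct.
Variables (R : realType) (V : lmodType R[i]) (ip : V -> V -> R[i]).
Hypothesis ip_inner : is_inner_product ip.

Lemma ipDr x y z : ip x (y + z) = ip x y + ip x z.
Proof. by case: ip_inner => lin _ _ _; rewrite -{1}[y]scale1r lin mul1r. Qed.

Lemma ip0r x : ip x 0 = 0.
Proof. by apply/(addrI (ip x 0)); rewrite -ipDr !addr0. Qed.

Lemma ipZr x a y : ip x (a *: y) = a * ip x y.
Proof. by case: ip_inner => lin _ _ _; rewrite -[a *: y]addr0 lin ip0r addr0. Qed.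

Lemma ipNr x y : ip x (- y) = - ip x y.
Proof. by rewrite -scaleN1r ipZr mulN1r. Qed.

Lemma ipC x y : ip y x = (ip x y)^*.
Proof. by case: ip_inner. Qed.

Lemma ipDl x y z : ip (x + y) z = ip x z + ip y z.
Proof. by rewrite ipC ipDr rmorphD /= -!ipC. Qed.

Lemma ipZl a x y : ip (a *: x) y = a^* * ip x y.
Proof. by rewrite ipC ipZr rmorphM /= -ipC. Qed.

Lemma ipNl x y : ip (- x) y = - ip x y.
Proof. by rewrite ipC ipNr rmorphN /= -ipC. Qed.

Lemma Re_ipC x y : complex.Re (ip y x) = complex.Re (ip x y).
Proof. by rewrite ipC; case: (ip x y). Qed.

Definition sqhnorm x := complex.Re (ip x x).

Lemma sqhnorm_ge0 x : 0 <= sqhnorm x.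
Proof. by case: ip_inner => _ _ ge0 _; have := ge0 x; rewrite lecE => /andP[]. Qed.

Lemma ip_self x : ip x x = (sqhnorm x)%:C.
Proof.
case: ip_inner => _ _ ge0 _; have := ger0_Im (ge0 x).
by rewrite /sqhnorm; case: (ip x x) => ? ? /= ->.
Qed.

Lemma sqhnorm_eq0 x : sqhnorm x = 0 -> x = 0.
Proof. by case: ip_inner => _ _ _ def0 nx0; apply: def0; rewrite ip_self nx0. Qed.

Lemma hnorm_lt_sqr x l : 0 <= l -> hnorm ip x < l -> sqhnorm x < l ^+ 2.
Proof.
by move=> l0 xl; rewrite -(sqr_sqrtr (sqhnorm_ge0 x)) ltrXn2r ?nnegrE ?sqrtr_ge0.
Qed.

Lemma sqhnormD x y : sqhnorm (x + y) = sqhnorm x + 2 * complex.Re (ip x y) + sqhnorm y.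
Proof. by rewrite /sqhnorm ipDl !ipDr !raddfD /= [complex.Re (ip y x)]Re_ipC; ring. Qed.

Lemma sqhnormN x : sqhnorm (- x) = sqhnorm x.
Proof. by rewrite /sqhnorm ipNl ipNr opprK. Qed.

Lemma sqhnormB x y : sqhnorm (x - y) = sqhnorm x - 2 * complex.Re (ip x y) + sqhnorm y.
Proof. by rewrite sqhnormD sqhnormN ipNr raddfN /=; ring. Qed.

Lemma sqhnormZ a x : sqhnorm (a *: x) = sqmod a * sqhnorm x.
Proof. by rewrite {1}/sqhnorm ipZl ipZr ip_self /sqmod; case: a => a b /=; ring. Qed.

Lemma sqhnormD_le x y : sqhnorm (x + y) <= 2 * (sqhnorm x + sqhnorm y).
Proof. by have := sqhnorm_ge0 (x - y); rewrite sqhnormB sqhnormD; lra. Qed.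

Lemma Re_ipZl_real (l : R) x y : complex.Re (ip (l%:C *: x) y) = l * complex.Re (ip x y).
Proof. by rewrite ipZl; case: (ip x y) => ? ? /=; ring. Qed.

(* A weak Cauchy-Schwarz inequality, read off from [0 <= |l x +- y|^2]. *)
Lemma Re_ip_small x y l : 0 < l -> sqhnorm y <= l ^+ 2 ->
  2 * `|complex.Re (ip x y)| <= l * (sqhnorm x + 1).
Proof.
move=> l0 yl; rewrite -(ler_pM2l l0).
have := sqhnorm_ge0 (l%:C *: x + y); have := sqhnorm_ge0 (l%:C *: x - y).
rewrite sqhnormB sqhnormD sqhnormZ sqmod_real Re_ipZl_real.
have := sqhnorm_ge0 x.
by case: (lerP 0 (complex.Re (ip x y))) => [/ger0_norm|/ltr0_norm] ->; nra.
Qed.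

Lemma Im_ip_small x y l : 0 < l -> sqhnorm y <= l ^+ 2 ->
  2 * `|complex.Im (ip x y)| <= l * (sqhnorm x + 1).
Proof.
have -> : complex.Im (ip x y) = complex.Re (ip x (- 'i *: y)).
  by rewrite ipZr; case: (ip x y) => ? ? /=; ring.
have -> : sqhnorm y = sqhnorm (- 'i *: y) by rewrite sqhnormZ /sqmod /=; ring.
exact: Re_ip_small.
Qed.

Lemma sqhnorm_sub_proj psi y : ip psi psi = 1 ->
  sqhnorm (y - ip psi y *: psi) = sqhnorm y - sqmod (ip psi y).
Proof.
move=> psi1; rewrite sqhnormB sqhnormZ ipZr [ip y psi]ipC /sqhnorm psi1.
by rewrite /sqmod; case: (ip psi y) => ? ? /=; ring.
Qed.

Lemma ip_variance_ge0 psi y : ip psi psi = 1 ->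
  0 <= sqhnorm y - complex.Re (ip psi y) ^+ 2.
Proof.
move=> psi1; have := sqhnorm_ge0 (y - ip psi y *: psi).
rewrite sqhnorm_sub_proj // /sqmod; have := sqr_ge0 (complex.Im (ip psi y)); lra.
Qed.

Lemma ip_variance_eq0 psi y : ip psi psi = 1 ->
  sqhnorm y - complex.Re (ip psi y) ^+ 2 = 0 -> y = ip psi y *: psi.
Proof.
move=> psi1 var0; apply/eqP; rewrite -subr_eq0; apply/eqP/sqhnorm_eq0.
have := sqhnorm_ge0 (y - ip psi y *: psi).
rewrite sqhnorm_sub_proj // /sqmod; have := sqr_ge0 (complex.Im (ip psi y)); lra.
Qed.
End InnerProduct.

Definition quad_expansion (R : realType) (q : R -> R) (v : R) : Prop :=
  forall e : R, 0 < e -> exists2 d : R, 0 < d &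
    forall t, `|t| < d -> `|q t - (1 - v * t ^+ 2)| <= e * t ^+ 2.

Section Survival.
Variables (R : realType) (V : lmodType R[i]) (ip : V -> V -> R[i]).
Hypothesis ip_inner : is_inner_product ip.
Local Notation sqhnorm := (sqhnorm ip).

(* [zeno_rate psi a] is the coefficient of [- t^2] in [|<psi|U t psi>|^2] when [a]
   is the derivative of [U t psi] at [t = 0]; for [a = -(i/hbar) H psi] it is the
   paper's [tau_Z^-2]. *)
Definition zeno_rate (psi a : V) : R := sqhnorm a - complex.Im (ip psi a) ^+ 2.

Lemma sqmod_ip_unit x y w (t : R) : ip x x = 1 -> ip y y = 1 -> y - x = t%:C *: w ->
  sqmod (ip x y) = 1 - t ^+ 2 * zeno_rate x w + t ^+ 4 * sqhnorm w ^+ 2 / 4.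
Proof.
move=> x1 y1 yxw.
have ipxy : ip x y = 1 + t%:C * ip x w.
  by rewrite -[y](subrK x) (ipDr ip_inner) yxw (ipZr ip_inner) x1 addrC.
have Im_xy : complex.Im (ip x y) = t * complex.Im (ip x w).
  by rewrite ipxy; case: (ip x w) => ? ? /=; ring.
have Re_xy : complex.Re (ip x y) = 1 - t ^+ 2 * sqhnorm w / 2.
  have := sqhnormB ip_inner y x; rewrite yxw (sqhnormZ ip_inner) sqmod_real (Re_ipC ip_inner).
  by rewrite /sqhnorm x1 y1 /=; lra.
by rewrite /sqmod /zeno_rate Re_xy Im_xy; field.
Qed.

Lemma zeno_rate_near psi a e l : ip psi psi = 1 -> 0 < l <= 1 -> sqhnorm e <= l ^+ 2 ->
  `|zeno_rate psi (a + e) - zeno_rate psi a|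
    <= l * (sqhnorm a + 2 * `|complex.Im (ip psi a)| + 3).
Proof.
move=> psi1 /andP[l0 l1] el.
have Re_ae := Re_ip_small ip_inner a l0 el.
have := Im_ip_small ip_inner psi l0 el; rewrite /sqhnorm psi1 /= => Im_pe.
rewrite /zeno_rate (sqhnormD ip_inner) (ipDr ip_inner) raddfD /=.
set r := complex.Re (ip a e) in Re_ae *; set m := complex.Im (ip psi a).
set j := complex.Im (ip psi e) in Im_pe *.
have -> : sqhnorm a + 2 * r + sqhnorm e - (m + j) ^+ 2 - (sqhnorm a - m ^+ 2)
    = 2 * r + sqhnorm e - 2 * (m * j) - j ^+ 2 by ring.
have e0 := sqhnorm_ge0 ip_inner e.
have := ler_norm r; have := ler_norm (- r); rewrite normrN => r_lo r_hi.
have := ler_norm (m * j); have := ler_norm (- (m * j)); rewrite normrN => mj_lo mj_hi.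
have mj : `|m * j| <= `|m| * l by rewrite normrM ler_wpM2l //; lra.
have j2 : j ^+ 2 <= l ^+ 2 by rewrite -real_normK ?num_real // lerXn2r ?nnegrE //; lra.
have l2 : l ^+ 2 <= l by nra.
have j0 := sqr_ge0 j.
by rewrite ler_norml; apply/andP; split; lra.
Qed.

Lemma sqmod_ip_unit_near x y w a (t l : R) :
  ip x x = 1 -> ip y y = 1 -> y - x = t%:C *: w ->
  0 < l <= 1 -> sqhnorm (w - a) <= l ^+ 2 ->
  `|sqmod (ip x y) - (1 - zeno_rate x a * t ^+ 2)|
    <= t ^+ 2 * (l + t ^+ 2) * (sqhnorm a + 2 * `|complex.Im (ip x a)| + 3) ^+ 2.
Proof.
move=> x1 y1 yxw l01 wal; have /andP[l0 l1] := l01.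
set C := sqhnorm a + 2 * _ + 3.
have a0 := sqhnorm_ge0 ip_inner a.
have C1 : 1 <= C by rewrite /C; have := normr_ge0 (complex.Im (ip x a)); lra.
have := zeno_rate_near a x1 l01 wal; rewrite [a + _]addrC subrK -/C => rate.
have w0 := sqhnorm_ge0 ip_inner w.
have wC : sqhnorm w <= 2 * C.
  have := sqhnormD_le ip_inner a (w - a); rewrite [a + _]addrC subrK.
  by rewrite /C; have := normr_ge0 (complex.Im (ip x a)); nra.
rewrite (sqmod_ip_unit x1 y1 yxw) (_ : _ - _ = t ^+ 2 *
  ((zeno_rate x a - zeno_rate x w) + t ^+ 2 * (sqhnorm w ^+ 2 / 4))); last by ring.
rewrite normrM ger0_norm ?sqr_ge0 // -mulrA ler_wpM2l ?sqr_ge0 //.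
apply: (le_trans (ler_normD _ _)); rewrite distrC normrM ger0_norm ?sqr_ge0 //.
rewrite ger0_norm ?divr_ge0 ?sqr_ge0 // mulrDl.
apply: lerD.
  by apply: (le_trans rate); apply: ler_wpM2l; [exact: ltW | nra].
apply: ler_wpM2l; first exact: sqr_ge0.
by rewrite ler_pdivrMr //; nra.
Qed.

Lemma survival_expansion (U : R -> V -> V) (psi a : V) :
  (forall t x y, ip (U t x) (U t y) = ip x y) -> (forall x, U 0 x = x) ->
  diff_quot_to ip U psi a -> ip psi psi = 1 ->
  quad_expansion (fun t => sqmod (ip psi (U t psi))) (zeno_rate psi a).
Proof.
move=> U_unitary U0 dq psi1 e e0.
set C := sqhnorm a + 2 * `|complex.Im (ip psi a)| + 3.
have C0 : 0 < C.
  by rewrite /C; have := sqhnorm_ge0 ip_inner a; have := normr_ge0 (complex.Im (ip psi a)); lra.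
pose r := Order.min 1 (e / (2 * C ^+ 2)).
have r0 : 0 < r by rewrite lt_min ltr01 divr_gt0 // mulr_gt0 // exprn_gt0.
have r1 : r <= 1 by rewrite ge_min lexx.
have rC : 2 * r * C ^+ 2 <= e.
  have : r <= e / (2 * C ^+ 2) by rewrite ge_min lexx orbT.
  by rewrite ler_pdivlMr ?mulr_gt0 ?exprn_gt0 //; lra.
have [d d0 dqd] := dq r r0.
exists (Order.min d r) => [|t]; first by rewrite lt_min d0 r0.
rewrite lt_min => /andP[td tr].
have [->|t0] := eqVneq t 0.
  by rewrite U0 psi1 /sqmod /= !(expr0n, expr1n) /= !(mulr0, addr0, subr0, subrr, normr0).
pose w := (t^-1)%:C *: (U t psi - psi).
have Uw : U t psi - psi = t%:C *: w by rewrite /w scalerA -rmorphM mulfV // scale1r.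
have wa : sqhnorm (w - a) <= r ^+ 2.
  by apply/ltW/(hnorm_lt_sqr ip_inner); [exact: ltW | apply: dqd; rewrite normr_gt0 t0].
have Ut1 : ip (U t psi) (U t psi) = 1 by rewrite U_unitary.
apply: (le_trans (sqmod_ip_unit_near psi1 Ut1 Uw _ wa)); first by rewrite r0.
rewrite -/C [e * _]mulrC -mulrA; apply: ler_wpM2l; first exact: sqr_ge0.
have t2 : t ^+ 2 <= r.
  rewrite -real_normK ?num_real //; apply: (le_trans _ (ltW tr)).
  have := normr_ge0 t; nra.
by nra.
Qed.

Lemma zeno_rate_generator psi y (hbar : R) : hbar != 0 ->
  zeno_rate psi (- ('i / hbar%:C) *: y)
    = hbar ^-2 * (sqhnorm y - complex.Re (ip psi y) ^+ 2).
Proof.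
move=> hbar0; rewrite /zeno_rate (sqhnormZ ip_inner) (ipZr ip_inner) -rmorphV ?unitfE //.
by rewrite /sqmod; case: (ip psi y) => ? ? /=; field.
Qed.
End Survival.

Section ExpBounds.
Variable R : realType.
Implicit Types (x y k : R) (N : nat).

Lemma expR_le1D2x k : 0 <= k <= 2^-1 -> expR k <= 1 + 2 * k.
Proof.
move=> /andP[k0 k1].
have := expR_ge1Dx (- k); rewrite expRN => ek.
have ek0 := expR_gt0 k.
have := ler_wpM2r (ltW ek0) ek; rewrite mulVf ?lt0r_neq0 //; nra.
Qed.

Lemma expR_div1D_le x : -1 < x -> expR (x / (1 + x)) <= 1 + x.
Proof.
move=> x1; have x1' : 0 < 1 + x by lra.
have := expR_ge1Dx (- (x / (1 + x))); rewrite expRN.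
have -> : 1 + - (x / (1 + x)) = (1 + x)^-1 by field; rewrite gt_eqF.
by rewrite lef_pV2 ?posrE ?expR_gt0.
Qed.

Lemma exprn1D_le_expR x N : -1 <= x -> (1 + x) ^+ N <= expR (N%:R * x).
Proof.
move=> x1; rewrite expRM_natl lerXn2r ?nnegrE ?expR_ge0 ?expR_ge1Dx //; lra.
Qed.

Lemma expR_le_exprn1D x N : `|x| <= 2^-1 ->
  expR (N%:R * x - 2 * N%:R * x ^+ 2) <= (1 + x) ^+ N.
Proof.
rewrite ler_norml => /andP[x_lo x_hi]; have x1 : 0 < 1 + x by lra.
apply: (le_trans (y := expR (x / (1 + x)) ^+ N)); last first.
  by rewrite lerXn2r ?nnegrE ?expR_ge0 ?expR_div1D_le //; lra.
rewrite -expRM_natl ler_expR.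
have -> : x / (1 + x) = x - x ^+ 2 / (1 + x) by field; rewrite gt_eqF.
have sqr_div : x ^+ 2 / (1 + x) <= 2 * x ^+ 2.
  by rewrite ler_pdivrMr //; have := sqr_ge0 x; nra.
have N0 : 0 <= N%:R :> R by [].
nra.
Qed.

Lemma exprn1D_expR_dist x y k N :
  `|x| <= 2^-1 -> `|N%:R * x - y| + 2 * N%:R * x ^+ 2 <= k -> k <= 2^-1 ->
  `|(1 + x) ^+ N - expR y| <= 2 * k * expR y.
Proof.
move=> x_half Nxy k_half.
have Nx2 : 0 <= 2 * N%:R * x ^+ 2 by rewrite mulr_ge0 ?sqr_ge0 // mulr_ge0.
have := ler_norm (N%:R * x - y); have := ler_norm (- (N%:R * x - y)).
rewrite normrN => lo hi; have k0 : 0 <= k by have := normr_ge0 (N%:R * x - y); lra.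
have ey0 := expR_gt0 y.
have up : (1 + x) ^+ N <= expR y * (1 + 2 * k).
  apply: (le_trans (exprn1D_le_expR N _)); first by move: x_half; rewrite ler_norml; lra.
  apply: (le_trans (y := expR (y + k))); first by rewrite ler_expR; lra.
  by rewrite expRD; apply: ler_wpM2l; [exact: ltW | apply: expR_le1D2x; rewrite k0 k_half].
have down : expR y * (1 - k) <= (1 + x) ^+ N.
  apply: le_trans (expR_le_exprn1D N x_half).
  apply: (le_trans (y := expR (y - k))); last by rewrite ler_expR; lra.
  rewrite expRD; apply: ler_wpM2l; first exact: ltW.
  by have := expR_ge1Dx (- k); rewrite expRN.
by rewrite ler_norml; apply/andP; split; nra.
Qed.

Lemma exprn1D_near_expR (e B : R) : 0 < e -> 0 <= B ->
  exists2 eta : R, 0 < eta & exists N0 : nat, forall N, (N0 <= N)%N ->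
    forall x y, - B <= y <= 0 -> `|N%:R * x - y| <= eta ->
    `|(1 + x) ^+ N - expR y| < e.
Proof.
move=> e0 B0; pose eta := Order.min (8^-1) (e / 8).
have eta0 : 0 < eta by rewrite lt_min invr_gt0 ltr0n divr_gt0.
have eta8 : eta <= 8^-1 by rewrite ge_min lexx.
have etae : eta <= e / 8 by rewrite ge_min lexx orbT.
pose X := 2 * (B + 1) ^+ 2 / eta.
have X0 : 0 <= X by apply: divr_ge0; [nra | exact: ltW].
exists eta => //; exists (Num.bound X).+1 => N NX x y /andP[yB y0] Nxy.
have XN : X < N%:R.
  by apply: (lt_le_trans (archi_boundP X0)); rewrite ler_nat ltnW.
have N0 : 0 < N%:R :> R by apply: le_lt_trans XN.
have XN' : 2 * (B + 1) ^+ 2 < eta * N%:R by move: XN; rewrite /X ltr_pdivrMr // [N%:R * _]mulrC.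
have Nx : `|N%:R * x| <= B + 1.
  have -> : N%:R * x = (N%:R * x - y) + y by ring.
  apply: (le_trans (ler_normD _ _)); rewrite (ler0_norm y0); lra.
have Nx0 := normr_ge0 (N%:R * x).
have etaN := ler_wpM2r (ltW N0) eta8.
have B1 : B + 1 <= (B + 1) ^+ 2 by nra.
have x_half : `|x| <= 2^-1.
  have -> : x = N%:R^-1 * (N%:R * x) by rewrite mulrA mulVf ?mul1r // lt0r_neq0.
  rewrite normrM normfV (gtr0_norm N0) mulrC ler_pdivrMr //; lra.
have Nx2 : 2 * N%:R * x ^+ 2 <= eta.
  rewrite -(ler_pM2l N0) (_ : N%:R * _ = 2 * (N%:R * x) ^+ 2); last by ring.
  have : (N%:R * x) ^+ 2 <= (B + 1) ^+ 2.
    by rewrite -real_normK ?num_real // lerXn2r ?nnegrE //; lra.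
  nra.
have := exprn1D_expR_dist x_half (lerD Nxy (lexx _)) ltac:(lra).
have : expR y <= 1 by rewrite expR_le1.
have := expR_gt0 y; nra.
Qed.

End ExpBounds.

Section NatPowers.
Variable R : realType.
Implicit Types (N : nat).

Lemma powR_natE N (c : R) : (0 < N)%N -> N%:R `^ c = expR (c * ln N%:R).
Proof. by move=> N0; rewrite /powR pnatr_eq0 eqn0Ngt N0. Qed.

Lemma ln_nat_gt (z : R) : exists N0, forall N, (N0 <= N)%N -> z < ln N%:R.
Proof.
have ez0 := expR_gt0 z.
exists (Num.bound (expR z)).+1 => N N0N.
have ezN : expR z < N%:R.
  by apply: (lt_le_trans (archi_boundP (ltW ez0))); rewrite ler_nat ltnW.
by rewrite -ltr_expR lnK // posrE (lt_trans ez0).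
Qed.

Lemma powR_nat_lt (c e : R) : c < 0 -> 0 < e ->
  exists N0, forall N, (0 < N)%N -> (N0 <= N)%N -> N%:R `^ c < e.
Proof.
move=> c0 e0; have [N0 lnN] := ln_nat_gt (ln e / c).
exists N0 => N N0' N0N; rewrite powR_natE // -[e]lnK ?posrE // ltr_expR.
by rewrite mulrC -ltr_ndivrMr // lnN.
Qed.

Lemma powR_nat_gt (c L : R) : 0 < c ->
  exists N0, forall N, (0 < N)%N -> (N0 <= N)%N -> L < N%:R `^ c.
Proof.
move=> c0; have [N0 lnN] := ln_nat_gt (`|L| / c).
exists N0 => N N0' N0N; rewrite powR_natE //.
have := lnN N N0N; rewrite ltr_pdivrMr // => Lc.
apply: (le_lt_trans (ler_norm L)); apply: lt_le_trans (expR_ge1Dx _); lra.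
Qed.

Lemma mulr_nat_sqr_powR N (a tau : R) : (0 < N)%N ->
  N%:R * (tau * N%:R `^ a) ^+ 2 = tau ^+ 2 * N%:R `^ (2 * a + 1).
Proof.
move=> N0; have N0' : (0 : R) < N%:R by rewrite ltr0n.
rewrite !powR_natE // exprMn -expRM_natl -{1}[N%:R]lnK ?posrE //.
by rewrite mulrCA -expRD; congr (_ * expR _); ring.
Qed.
End NatPowers.

Section CompactBounds.
Variable R : realType.

Lemma compact_normr_le (K : set R) : compact K ->
  exists M : R, 0 <= M /\ forall x, K x -> `|x| <= M.
Proof.
move=> Kc; have [M0 [M0r KM0]] := compact_bounded Kc.
exists (`|M0| + 1); split => [|x Kx]; first by rewrite addr_ge0.
by apply: KM0 => //; rewrite (le_lt_trans (real_ler_norm M0r)) // ltrDl.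
Qed.

Lemma compact_normr_ge (K : set R) : compact K -> K `<=` ~` [set 0] ->
  exists2 d : R, 0 < d & forall x, K x -> d <= `|x|.
Proof.
move=> Kc K0.
have : nbhs (0 : R) (~` K).
  have := closed_openC (compact_closed (@Rhausdorff R) Kc); rewrite openE.
  by apply => K00; apply: (K0 0 K00).
move=> /nbhs_ballP [d /= d0 dK]; exists d => // x Kx.
rewrite leNgt; apply/negP => xd; apply: (dK x) => //.
by rewrite -ball_normE /= sub0r normrN.
Qed.
End CompactBounds.

Definition scaled_pow (R : realType) (q : R -> R) (alpha : R) (N : nat) (tau : R) : R :=
  q (tau * N%:R `^ (alpha - 1)) ^+ N.

Section ScaledPowers.
Variables (R : realType) (q : R -> R) (v : R).
Hypothesis q_expansion : quad_expansion q v.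

Lemma quad_expansion_scaled alpha e M : alpha < 1 -> 0 < e -> 0 <= M ->
  exists N0, forall N, (0 < N)%N -> (N0 <= N)%N -> forall tau, `|tau| <= M ->
  `|N%:R * (q (tau * N%:R `^ (alpha - 1)) - 1) + v * (tau ^+ 2 * N%:R `^ (2 * alpha - 1))|
    <= e * (tau ^+ 2 * N%:R `^ (2 * alpha - 1)).
Proof.
move=> alpha1 e0 M0; have [d d0 qd] := q_expansion e0.
have alpha1' : alpha - 1 < 0 by lra.
have dM : 0 < d / (M + 1) by rewrite divr_gt0 //; lra.
have [N0 small] := powR_nat_lt alpha1' dM.
exists N0 => N N0' N0N tau tauM.
set t := tau * N%:R `^ (alpha - 1).
have td : `|t| < d.
  have := small N N0' N0N; rewrite ltr_pdivlMr; last lra.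
  have := powR_ge0 (N%:R : R) (alpha - 1).
  by rewrite /t normrM (ger0_norm (powR_ge0 _ _)); nra.
have -> : tau ^+ 2 * N%:R `^ (2 * alpha - 1) = N%:R * t ^+ 2.
  by rewrite mulr_nat_sqr_powR //; congr (_ * _ `^ _); ring.
rewrite (_ : _ + _ = N%:R * (q t - (1 - v * t ^+ 2))); last by ring.
by rewrite normrM ger0_norm // [e * _]mulrCA; apply: ler_wpM2l => //; apply: qd.
Qed.

Lemma scaled_pow_cvg1 alpha : alpha < 2^-1 ->
  unif_cvg_compacts setT (scaled_pow q alpha) (fun _ => 1).
Proof.
move=> alpha_lt K Kc _ e e0.
have [M [M0 KM]] := compact_normr_le Kc.
have [eta eta0 [N1 near1]] := exprn1D_near_expR e0 (lexx 0).
pose C := (`|v| + 1) * (M ^+ 2 + 1).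
have C0 : 0 < C by rewrite mulr_gt0 ?ltr_pwDr ?ltr01 ?sqr_ge0.
have alpha1 : alpha < 1 by lra.
have alpha2 : 2 * alpha - 1 < 0 by lra.
have etaC : 0 < eta / C by rewrite divr_gt0.
have [N2 expand] := quad_expansion_scaled alpha1 ltr01 M0.
have [N3 small] := powR_nat_lt alpha2 etaC.
exists (maxn N1 (maxn N2 N3)) => N N0; rewrite !geq_max => /and3P[N1N N2N N3N] tau Ktau.
have tauM := KM tau Ktau.
have := expand N N0 N2N tau tauM; have := small N N0 N3N.
rewrite /scaled_pow mul1r ltr_pdivlMr //.
set s := N%:R `^ _; set t := tau * _; move=> sC Nx.
have s0 : 0 <= s := powR_ge0 _ _.
have tau2 : tau ^+ 2 <= M ^+ 2.
  by rewrite -real_normK ?num_real // lerXn2r ?nnegrE.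
have := near1 N N1N (q t - 1) 0; rewrite expR0 [1 + _]addrC subrK; apply.
  by rewrite oppr0 lexx.
rewrite subr0 (_ : N%:R * _ = N%:R * (q t - 1) + v * (tau ^+ 2 * s) - v * (tau ^+ 2 * s));
  last by ring.
apply: (le_trans (ler_normB _ _)); rewrite normrM (ger0_norm (mulr_ge0 (sqr_ge0 _) s0)).
have : tau ^+ 2 * s <= (M ^+ 2 + 1) * s by rewrite ler_wpM2r //; lra.
move=> /(ler_wpM2l (addr_ge0 (normr_ge0 v) ler01)) tau_s.
rewrite /C in sC; lra.
Qed.

Lemma scaled_pow_cvg_expR : 0 <= v ->
  unif_cvg_compacts setT (scaled_pow q 2^-1) (fun tau => expR (- (tau ^+ 2 * v))).
Proof.
move=> v0 K Kc _ e e0.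
have [M [M0 KM]] := compact_normr_le Kc.
have B0 : 0 <= M ^+ 2 * v by rewrite mulr_ge0 ?sqr_ge0.
have [eta eta0 [N1 near1]] := exprn1D_near_expR e0 B0.
have half1 : 2^-1 < 1 :> R by rewrite invf_lt1 ?ltr1n.
have M1 : 0 < M ^+ 2 + 1 by have := sqr_ge0 M; lra.
have etaM : 0 < eta / (M ^+ 2 + 1) by rewrite divr_gt0.
have [N2 expand] := quad_expansion_scaled half1 etaM M0.
exists (maxn N1 N2) => N N0; rewrite geq_max => /andP[N1N N2N] tau Ktau.
have tauM := KM tau Ktau.
have tau2 : tau ^+ 2 <= M ^+ 2.
  by rewrite -real_normK ?num_real // lerXn2r ?nnegrE.
have := expand N N0 N2N tau tauM.
rewrite /scaled_pow mulfV ?pnatr_eq0 // subrr powRr0 mulr1.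
set t := tau * _ => Nx.
have := near1 N N1N (q t - 1) (- (tau ^+ 2 * v)); rewrite [1 + _]addrC subrK; apply.
  by apply/andP; split; [rewrite lerN2 ler_wpM2r | rewrite oppr_le0 mulr_ge0 ?sqr_ge0].
rewrite opprK [_ * v]mulrC; apply: (le_trans Nx).
by rewrite mulrAC ler_pdivrMr // ler_pM2l //; lra.
Qed.

Lemma scaled_pow_cvg0 alpha : 0 < v -> (forall t, 0 <= q t) -> 2^-1 < alpha < 1 ->
  unif_cvg_compacts (~` [set 0]) (scaled_pow q alpha) (fun _ => 0).
Proof.
move=> v0 q0 /andP[alpha_gt alpha1] K Kc K0 e e0.
have [M [M0 KM]] := compact_normr_le Kc.
have [d d0 Kd] := compact_normr_ge Kc K0.
have v2 : 0 < v / 2 by rewrite divr_gt0.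
have alpha2 : 0 < 2 * alpha - 1 by lra.
have [N1 expand] := quad_expansion_scaled alpha1 v2 M0.
have [N2 big] := powR_nat_gt (2 / (v * d ^+ 2 * e)) alpha2.
exists (maxn N1 N2) => N N0; rewrite geq_max => /andP[N1N N2N] tau Ktau.
have := expand N N0 N1N tau (KM tau Ktau); have := big N N0 N2N.
rewrite /scaled_pow; set s := N%:R `^ _; set t := tau * _ => Ls Nx.
rewrite subr0 ger0_norm ?exprn_ge0 //.
have d2 : d ^+ 2 <= tau ^+ 2.
  by rewrite -[tau ^+ 2]real_normK ?num_real // lerXn2r ?nnegrE ?Kd // ltW.
pose X := v / 2 * (d ^+ 2 * s).
have NxX : N%:R * (q t - 1) <= - X.
  have s0 : 0 <= s := powR_ge0 _ _.
  have := ler_wpM2l (ltW v2) (ler_wpM2r s0 d2).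
  have := ler_norm (N%:R * (q t - 1) + v * (tau ^+ 2 * s)).
  by rewrite /X; lra.
have eX : 1 < e * expR X.
  have vde : 0 < v * d ^+ 2 * e by rewrite !mulr_gt0 // exprn_gt0.
  move: Ls; rewrite ltr_pdivrMr // => Ls.
  have eXE : e * X = s * (v * d ^+ 2 * e) / 2 by rewrite /X; field.
  have := ler_wpM2l (ltW e0) (expR_ge1Dx X); lra.
apply: (le_lt_trans (y := expR (- X))).
  rewrite (_ : q t = 1 + (q t - 1)); last by ring.
  apply: (le_trans (exprn1D_le_expR N _)); first by have := q0 t; lra.
  by rewrite ler_expR.
by rewrite expRN -div1r ltr_pdivrMr ?expR_gt0.
Qed.
End ScaledPowers.

Theorem theorem1 (R : realType) (V : lmodType R[i]) (ip : V -> V -> R[i])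
    (D : set V) (H : V -> V) (hbar : R) (U : R -> V -> V) (psi : V) :
  separable_Hilbert ip ->
  self_adjoint ip D H ->
  0 < hbar ->
  generated_by ip hbar D H U ->
  D psi -> ip psi psi = 1 ->
  let p := fun t : R => sqmod (ip psi (U t psi)) in
  let pN := fun (alpha : R) (N : nat) (tau : R) =>
              p (tau * (N%:R `^ (alpha - 1))) ^+ N in
  let tauZinv2 := hbar ^-2 *
      (complex.Re (ip (H psi) (H psi)) - complex.Re (ip psi (H psi)) ^+ 2) in
  [/\ (forall alpha : R, 0 <= alpha < 2^-1 ->
         unif_cvg_compacts setT (pN alpha) (fun _ => 1)),
      unif_cvg_compacts setT (pN (2^-1))
         (fun tau => expR (- (tau ^+ 2 * tauZinv2))) &
      (forall alpha : R, 2^-1 < alpha < 1 ->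
         ~ (exists lambda : R[i], H psi = lambda *: psi) ->
         unif_cvg_compacts (~` [set 0]) (pN alpha) (fun _ => 0))].
Proof.
move=> [ip_inner _ _] _ hbar0 [[_ U_unitary U0 _ _] _ dq] Dpsi psi1 p pN tauZinv2.
have rateE : zeno_rate ip psi (- ('i / hbar%:C) *: H psi) = tauZinv2.
  exact: (zeno_rate_generator ip_inner psi (H psi) (lt0r_neq0 hbar0)).
have p_expansion : quad_expansion p tauZinv2.
  by rewrite -rateE; apply: (survival_expansion ip_inner U_unitary U0 (dq psi Dpsi) psi1).
have hbar2 : 0 < hbar ^-2 by rewrite invr_gt0 exprn_gt0.
have tauZ_ge0 : 0 <= tauZinv2.
  exact: (mulr_ge0 (ltW hbar2) (ip_variance_ge0 ip_inner (H psi) psi1)).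
split.
- by move=> alpha /andP[_ alpha_lt]; apply: (scaled_pow_cvg1 p_expansion alpha_lt).
- exact: (scaled_pow_cvg_expR p_expansion tauZ_ge0).
- move=> alpha alpha_range not_eigen.
  have var_gt0 : 0 < sqhnorm ip (H psi) - complex.Re (ip psi (H psi)) ^+ 2.
    rewrite lt_neqAle eq_sym (ip_variance_ge0 ip_inner (H psi) psi1) andbT.
    apply/eqP => var0; apply: not_eigen; exists (ip psi (H psi)).
    exact: (ip_variance_eq0 ip_inner psi1 var0).
  apply: (scaled_pow_cvg0 p_expansion (mulr_gt0 hbar2 var_gt0) _ alpha_range) => t.
  by rewrite /p /sqmod addr_ge0 ?sqr_ge0.
Qed.
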